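(* Let $V$ be a finite vocabulary. Each word $x\in V$ has a synonym set $S_x\subseteq V$ with $x\in S_x$, the synonym relation being symmetric, and a nonempty perturbation set $P_x\subseteq V$. Fix integers $L\ge1$, $0\le R\le L$ and a finite label set $\mathcal{Y}$ with $|\mathcal{Y}|\ge2$. For $X=x_1,\ldots,x_L\in V^L$ let $S_X=\{X'\in V^L: \sum_i\mathbb{I}\{x'_i\ne x_i\}\le R,\ x'_i\in S_{x_i}\ \forall i\}$ and $\Pi_X(Z)=\prod_{i=1}^L\mathbb{I}\{z_i\in P_{x_i}\}/|P_{x_i}|$. For a classifier $h:V^L\to\mathcal{Y}$ write $g^{\mathrm{RS}}_h(X,c)=\mathbb{P}_{Z\sim\Pi_X}(h(Z)=c)$ and $h^{\mathrm{RS}}(X)=\arg\max_c g^{\mathrm{RS}}_h(X,c)$. Assume $|P_x|=|P_{x'}|$ for every word $x$ and every $x'\in S_x$. Let $q_x=\min_{x'\in S_x}|P_x\cap P_{x'}|/|P_x|$, and for a sentence $X$ order its positions $i_1,\ldots,i_L$ so that $q_{x_{i_1}}\le\cdots\le q_{x_{i_L}}$ and put $q_X=1-\prod_{j=1}^R q_{x_{i_j}}$. Let $f:V^L\to\mathcal{Y}$ be a classifier and $X\in V^L$ a sentence with $f^{\mathrm{RS}}(X)=y$, and let $y_B=\arg\max_{c\ne y}g^{\mathrm{RS}}_f(X,c)$. Then there exists a classifier $f_*:V^L\to\mathcal{Y}$ such that $g^{\mathrm{RS}}_{f_*}(X,c)=g^{\mathrm{RS}}_f(X,c)$ for $c\in\{y,y_B\}$,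 and $$\min_{X'\in S_X}g^{\mathrm{RS}}_{f_*}(X',y)=\max\big(g^{\mathrm{RS}}_{f_*}(X,y)-q_X,0\big),\qquad \max_{X'\in S_X}g^{\mathrm{RS}}_{f_*}(X',y_B)=\min\big(g^{\mathrm{RS}}_{f_*}(X,y_B)+q_X,1\big).$$
   Context: This expresses that the bounds $g^{\mathrm{RS}}(X,c)\pm q_X$ on the smoothed soft scores over adversarial sentences $X'\in S_X$ cannot be improved using only the values $g^{\mathrm{RS}}(X,y)$ and $g^{\mathrm{RS}}(X,y_B)$. *)

From mathcomp Require Import all_boot all_order all_algebra.
Set Implicit Arguments. Unset Strict Implicit. Unset Printing Implicit Defensive.
Import Order.TTheory GRing.Theory Num.Theory.
Local Open Scope ring_scope.

Notation sentence V L := {ffun 'I_L -> V}.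

Definition adv_set (V : finType) (S : V -> {set V}) (L r : nat)
    (X : sentence V L) : {set sentence V L} :=
  [set X' : sentence V L | (#|[set i | X' i != X i]| <= r)%N
                           && [forall i, X' i \in S (X i)]].

Definition PiX (K : realFieldType) (V : finType) (P : V -> {set V}) (L : nat)
    (X Z : sentence V L) : K :=
  \prod_(i < L) ((Z i \in P (X i))%:R / (#|P (X i)|)%:R).

Definition gRS (K : realFieldType) (V : finType) (P : V -> {set V}) (L : nat)
    (Y : finType) (h : sentence V L -> Y) (X : sentence V L) (c : Y) : K :=
  \sum_(Z : sentence V L) PiX K P X Z * (h Z == c)%:R.

(* q_x = min_{x' in S_x} |P_x ∩ P_x'| / |P_x|  (all values are <= 1 and S_x is
   nonempty, so 1 is a harmless initial value for the iterated minimum) *)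
Definition qword (K : realFieldType) (V : finType) (S P : V -> {set V}) (x : V) : K :=
  \big[Num.min/1]_(x' in S x) ((#|P x :&: P x'|)%:R / (#|P x|)%:R).

Definition qsent (K : realFieldType) (V : finType) (S P : V -> {set V}) (L r : nat)
    (X : sentence V L) : K :=
  1 - \prod_(v <- take r (sort <=%R [seq qword K S P (X i) | i <- enum 'I_L])) v.

(* Pi_X is the uniform distribution on the box B_X = P_{x_1} x ... x P_{x_L}, so g^RS_h(X, c)
   is the fraction of B_X that h labels c. For X' in S_X the boxes B_X and B_X' have the same
   size, and the fraction of B_X outside B_X' is 1 - prod_i |P_{x_i} :&: P_{x'_i}| / |P_{x_i}|;
   at most R factors differ from 1 and each is at least q_{x_i}, so this fraction is at most
   q_X. Moving from B_X to B_X' therefore changes the mass of any label by at most q_X. Both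
   bounds are attained: replacing the R words with the smallest q by synonyms realising q gives
   an X_* with exactly a q_X fraction of B_X outside B_X_*, and rearranging the labels of f on
   B_X so that its y-labels fill B_X :\: B_X_* first and its y_B-labels fill B_X :&: B_X_*
   first, while B_X_* :\: B_X is labelled y_B, realises both extremes at X_*. *)

From mathcomp Require Import all_boot all_order all_algebra.
From mathcomp Require Import zify lra.
Import Order.TTheory GRing.Theory Num.Theory.
Set Implicit Arguments. Unset Strict Implicit. Unset Printing Implicit Defensive.
Local Open Scope ring_scope.

Lemma uniq_exists_map (T : eqType) (U : Type) (d : U) (s : seq T) (l : seq U) :
  uniq s -> size l = size s -> exists g : T -> U, map g s = l.
Proof.
elim: s l => [|x s IHs] [|u l] //=.
case/andP=> xNs s_uniq /eqP; rewrite eqSS => /eqP /(IHs _ s_uniq) [g gs].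
exists (fun t => if t == x then u else g t); rewrite eqxx; congr (_ :: _).
by rewrite -gs; apply/eq_in_map => t ts; case: eqP ts xNs => // ->->.
Qed.

Section FrontBack.
Variables (Y : eqType) (y z : Y).
Hypothesis zNy : z != y.

Definition front_back (F : seq Y) : seq Y :=
  nseq (count_mem y F) y ++ [seq c <- F | c \notin [:: y; z]] ++ nseq (count_mem z F) z.

Lemma perm_front_back F : perm_eq (front_back F) F.
Proof.
apply/permP => p; rewrite /front_back !count_cat !count_nseq count_filter.
elim: F => [|c F IHF] /=; first by rewrite !muln0.
rewrite -IHF !inE; case: (eqVneq c y) => [->|cy]; last case: (eqVneq c z) => [->|cz] /=.
- by rewrite eq_sym (negbTE zNy) andbF; case: (p y); lia.
- by rewrite andbF; case: (p z); lia.
- by rewrite andbT; case: (p c); lia.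
Qed.

Lemma count_front_drop k F :
  count_mem y (drop k (front_back F)) = (count_mem y F - k)%N.
Proof.
have yNrest : y \notin [seq c <- F | c \notin [:: y; z]] ++ nseq (count_mem z F) z.
  by rewrite mem_cat mem_filter !inE eqxx /= mem_nseq eq_sym (negbTE zNy) andbF.
rewrite /front_back drop_cat size_nseq; case: ltnP => kF.
  by rewrite count_cat drop_nseq count_nseq /= eqxx (count_memPn yNrest) addn0 mul1n.
rewrite (count_memPn _); first lia.
by apply: contraNN yNrest => /mem_drop.
Qed.

Lemma count_back_drop k F :
  count_mem z (drop k (front_back F)) = minn (count_mem z F) (size F - k).
Proof.
rewrite -(perm_size (perm_front_back F)) /front_back catA size_cat size_nseq.
set front := nseq _ y ++ _.
have zNfront : z \notin front.
  by rewrite mem_cat mem_filter !inE eqxx orbT /= mem_nseq (negbTE zNy) andbF.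
rewrite drop_cat; case: ltnP => kF.
  rewrite count_cat (count_memPn _) ?count_nseq /= ?eqxx ?mul1n; first lia.
  by apply: contraNN zNfront => /mem_drop.
by rewrite drop_nseq count_nseq /= eqxx mul1n; lia.
Qed.

End FrontBack.

Section Relabel.
Variables (T Y : finType).

Definition nlabel (h : T -> Y) (B : {set T}) (c : Y) : nat := #|[set Z in B | h Z == c]|.

Lemma nlabelE h (B : {set T}) c s : uniq s -> s =i B -> nlabel h B c = count_mem c (map h s).
Proof.
move=> s_uniq sB; rewrite count_map -size_filter -(card_uniqP (filter_uniq _ s_uniq)).
by apply: eq_card => Z; rewrite !inE mem_filter sB andbC.
Qed.

Lemma nlabel_setD h B B' c : (nlabel h B c <= nlabel h B' c + #|B :\: B'|)%N.
Proof.
rewrite /nlabel -(cardsID B' [set Z in B | h Z == c]) leq_add //.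
  by apply/subset_leq_card/subsetP => Z; rewrite !inE => /andP[/andP[_ ->] ->].
by apply/subset_leq_card/subsetP => Z; rewrite !inE => /andP[-> /andP[-> _]].
Qed.

Lemma nlabel_le_card h B c : (nlabel h B c <= #|B|)%N.
Proof. by apply/subset_leq_card/subsetP => Z; rewrite inE => /andP[]. Qed.

Lemma card_setD_sym (B B' : {set T}) : #|B'| = #|B| -> #|B' :\: B| = #|B :\: B'|.
Proof. by rewrite !cardsD setIC => ->. Qed.

Lemma card_filter_enum (B : {set T}) (p : pred T) :
  size [seq Z <- enum B | p Z] = #|[set Z in B | p Z]|.
Proof.
rewrite -(card_uniqP (filter_uniq _ (enum_uniq B))).
by apply: eq_card => Z; rewrite !inE mem_filter mem_enum andbC.
Qed.

Lemma nlabel_outside h (B B' : {set T}) z c : {in ~: B, forall Z, h Z = z} ->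
  nlabel h B' c = (nlabel h (B :&: B') c + (c == z) * #|B' :\: B|)%N.
Proof.
move=> h_out; rewrite /nlabel -(cardsID B); congr (_ + _)%N.
  by apply: eq_card => Z; rewrite !inE andbAC [(Z \in B) && _]andbC.
case: (eqVneq c z) => [-> | cNz] /=.
  rewrite mul1n; apply: eq_card => Z; rewrite !inE.
  by case: (boolP (Z \in B)) => //= ZNB; rewrite h_out ?inE // eqxx andbT.
apply/eqP; rewrite mul0n cards_eq0; apply/eqP/setP => Z; rewrite !inE.
by case: (boolP (Z \in B)) => //= ZNB; rewrite h_out ?inE // eq_sym (negbTE cNz) andbF.
Qed.

Lemma relabel (B B' : {set T}) (f : T -> Y) (y z : Y) : z != y -> #|B'| = #|B| ->
  exists g : T -> Y,
    [/\ forall c, nlabel g B c = nlabel f B c,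
        nlabel g B' y = (nlabel f B y - #|B :\: B'|)%N &
        nlabel g B' z = minn (nlabel f B z + #|B :\: B'|) #|B|].
Proof.
move=> zNy BB'.
set lost := [seq Z <- enum B | Z \notin B'].
set kept := [seq Z <- enum B | Z \in B'].
have s_perm : perm_eq (lost ++ kept) (enum B) by rewrite perm_catC perm_filterC.
have s_uniq : uniq (lost ++ kept) by rewrite (perm_uniq s_perm) enum_uniq.
have sB : lost ++ kept =i B by move=> Z; rewrite (perm_mem s_perm) mem_enum.
have kept_uniq : uniq kept by rewrite filter_uniq ?enum_uniq.
have keptBB' : kept =i B :&: B' by move=> Z; rewrite mem_filter mem_enum !inE andbC.
have size_s : size (lost ++ kept) = #|B| by rewrite (perm_size s_perm) cardE.
have size_lost : size lost = #|B :\: B'|.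
  by rewrite card_filter_enum; apply: eq_card => Z; rewrite !inE andbC.
(* lost is enumerated first, so the y-labels of l land on B :\: B' and its z-labels on B :&: B' *)
set l := front_back y z (map f (lost ++ kept)).
have [g0 g0s] : exists g0 : T -> Y, map g0 (lost ++ kept) = l.
  by apply: (uniq_exists_map y s_uniq); rewrite (perm_size (perm_front_back zNy _)) size_map.
pose g Z := if Z \in B then g0 Z else z.
have gs : map g (lost ++ kept) = l.
  by rewrite -g0s; apply/eq_in_map => Z; rewrite sB /g => ->.
have g_out : {in ~: B, forall Z, g Z = z} by move=> Z; rewrite inE /g => /negbTE ->.
have gB c : nlabel g B c = count_mem c l by rewrite (nlabelE _ _ s_uniq sB) gs.
have gB' c : nlabel g B' c = (count_mem c (drop (size lost) l) + (c == z) * #|B :\: B'|)%N.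
  rewrite (nlabel_outside _ _ g_out) (nlabelE _ _ kept_uniq keptBB') (card_setD_sym BB').
  by rewrite -gs map_cat drop_size_cat ?size_map.
have lost_le : (#|B :\: B'| <= #|B|)%N by rewrite -size_lost -size_s size_cat leq_addr.
rewrite !(nlabelE f _ s_uniq sB); exists g; split.
- by move=> c; rewrite gB (nlabelE f _ s_uniq sB) (permP (perm_front_back zNy _)).
- by rewrite gB' (count_front_drop zNy) size_lost eq_sym (negbTE zNy) mul0n addn0.
- by rewrite gB' (count_back_drop zNy) eqxx mul1n size_map size_s size_lost; lia.
Qed.

End Relabel.

Section NatRatio.
Variable K : realFieldType.

Lemma ler_natr_div (m n N : nat) : (m <= n)%N -> m%:R / N%:R <= n%:R / N%:R :> K.
Proof. by move=> mn; rewrite ler_wpM2r ?invr_ge0 ?ler0n ?ler_nat. Qed.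

Lemma natr_subn_div (n d N : nat) :
  (n - d)%N%:R / N%:R = Num.max (n%:R / N%:R - d%:R / N%:R) 0 :> K.
Proof.
case: (leqP d n) => [dn | nd].
  by rewrite natrB // mulrBl max_l // subr_ge0; apply: ler_natr_div.
have /eqP -> : (n - d == 0)%N by rewrite subn_eq0 ltnW.
by rewrite mul0r max_r // subr_le0; apply/ler_natr_div/ltnW.
Qed.

Lemma natr_minn_div (n d N : nat) : (0 < N)%N ->
  (minn (n + d) N)%N%:R / N%:R = Num.min (n%:R / N%:R + d%:R / N%:R) 1 :> K.
Proof.
move=> N_gt0; have NN : N%:R / N%:R = 1 :> K by rewrite divff // pnatr_eq0 -lt0n.
rewrite -mulrDl -natrD; case: (leqP (n + d) N) => [ndN | Nnd].
  by rewrite min_l // -[X in _ <= X]NN; apply: ler_natr_div.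
by rewrite NN min_r // -[X in X <= _]NN; apply/ler_natr_div/ltnW.
Qed.

End NatRatio.

Section SmallestProduct.
Variables (K : realFieldType) (I : finType) (q : I -> K).
Hypothesis q_ge0 : forall i, 0 <= q i.
Hypothesis q_le1 : forall i, q i <= 1.

Definition prod_smallest (r : nat) : K :=
  \prod_(v <- take r (sort <=%R [seq q i | i <- enum I])) v.

Lemma prod_le_exchange (T C : {set I}) : (#|C| <= #|T|)%N ->
  {in T & ~: T, forall t c, q t <= q c} -> \prod_(i in T) q i <= \prod_(i in C) q i.
Proof.
move=> CT qTC; rewrite (big_setID C) [X in _ <= X](big_setID T) setIC.
apply: ler_wpM2l; first exact: prodr_ge0.
pose m := \big[Num.min/1]_(i in C :\: T) q i.
have m_ge0 : 0 <= m by apply: le_bigmin.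
have Tm t : t \in T -> q t <= m.
  by move=> tT; apply: le_bigmin => // c; rewrite inE => /andP[cNT _]; apply: qTC; rewrite ?inE.
apply: (@le_trans _ _ (m ^+ #|T :\: C|)).
  by rewrite -prodr_const; apply: ler_prod => i; rewrite inE => /andP[_ iT]; rewrite q_ge0 Tm.
apply: (@le_trans _ _ (m ^+ #|C :\: T|)).
  apply: ler_wiXn2l => //; first exact: bigmin_le_id.
  by rewrite !cardsD [C :&: T]setIC leq_sub2r.
rewrite -prodr_const; apply: ler_prod => i iCT.
by rewrite m_ge0 bigmin_le_cond.
Qed.

Lemma prod_smallestE r : exists T : {set I},
  [/\ #|T| = minn r #|I|, prod_smallest r = \prod_(i in T) q i &
      {in T & ~: T, forall t c, q t <= q c}].
Proof.
set e := sort (relpre q <=%R) (enum I).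
have e_uniq : uniq e by rewrite sort_uniq enum_uniq.
have size_e : size e = #|I| by rewrite size_sort -cardE.
exists [set i in take r e]; split.
- by rewrite cardsE (card_uniqP (take_uniq _ e_uniq)) size_take_min size_e.
- rewrite /prod_smallest sort_map -map_take big_map big_uniq ?take_uniq //.
  by apply: eq_bigl => i; rewrite inE.
- have e_pairwise : pairwise (relpre q <=%R) e.
    rewrite -sorted_pairwise; last by move=> j i k; exact: le_trans.
    by apply: sort_sorted => i j; exact: le_total.
  move: e_pairwise; rewrite -{1}(cat_take_drop r e) pairwise_cat.
  case/and3P=> /allrelP q_take_drop _ _ t c; rewrite !inE => tT cNT.
  apply: q_take_drop => //; have : c \in e by rewrite mem_sort mem_enum.
  by rewrite -{1}(cat_take_drop r e) mem_cat (negbTE cNT).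
Qed.

Lemma prod_smallest_le r (C : {set I}) : (#|C| <= r)%N ->
  prod_smallest r <= \prod_(i in C) q i.
Proof.
move=> Cr; have [T [cardT -> qT]] := prod_smallestE r.
by apply: prod_le_exchange qT; rewrite cardT leq_min Cr max_card.
Qed.

End SmallestProduct.

Section Smoothing.
Variables (K : realFieldType) (V : finType) (S P : V -> {set V}) (L r : nat).
Hypothesis S_refl : forall x, x \in S x.
Hypothesis P_neq0 : forall x, P x != set0.
Hypothesis P_size : forall x x', x' \in S x -> #|P x| = #|P x'|.
Implicit Types X : sentence V L.

Definition box X : {set sentence V L} := setXn (fun i => P (X i)).

Lemma card_box_gt0 X : (0 < #|box X|)%N.
Proof. by rewrite cardsXn prodn_gt0 // => i; rewrite card_gt0 P_neq0. Qed.

Lemma PiX_box X Z : PiX K P X Z = (Z \in box X)%:R / #|box X|%:R.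
Proof.
rewrite /PiX prodf_div cardsXn natr_prod; congr (_ / _).
have [/setXnP ZX | ZNX] := boolP (Z \in box X); first by rewrite big1 // => i _; rewrite ZX.
move: ZNX; rewrite in_setXn => /forallPn[i ZNi].
by rewrite (bigD1 i) //= (negbTE ZNi) mul0r.
Qed.

Lemma gRS_box (Y : finType) (h : sentence V L -> Y) X c :
  gRS K P h X c = (nlabel h (box X) c)%:R / #|box X|%:R.
Proof.
rewrite /gRS /nlabel -sum1_card natr_sum mulr_suml [RHS]big_mkcond; apply: eq_bigr => Z _.
by rewrite PiX_box in_set; case: (Z \in box X); case: (h Z == c); rewrite ?mulr1 ?mulr0 ?mul0r.
Qed.

Lemma gRS_ge0 (Y : finType) (h : sentence V L -> Y) X c : 0 <= gRS K P h X c.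
Proof. by rewrite gRS_box divr_ge0. Qed.

Lemma gRS_le1 (Y : finType) (h : sentence V L -> Y) X c : gRS K P h X c <= 1.
Proof.
by rewrite gRS_box ler_pdivrMr ?ltr0n ?card_box_gt0 // mul1r ler_nat nlabel_le_card.
Qed.

Lemma boxI X X' : box X :&: box X' = setXn (fun i => P (X i) :&: P (X' i)).
Proof.
apply/setP => Z; rewrite inE; apply/andP/setXnP => [[/setXnP ZX /setXnP ZX'] i | ZXX'].
  by rewrite inE ZX ZX'.
by split; apply/setXnP => i; have /setIP[] := ZXX' i.
Qed.

Definition overlap (x x' : V) : K := #|P x :&: P x'|%:R / #|P x|%:R.

Lemma overlap_id x : overlap x x = 1.
Proof. by rewrite /overlap setIid divff // pnatr_eq0 -lt0n card_gt0 P_neq0. Qed.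

Lemma overlap_ge0 x x' : 0 <= overlap x x'.
Proof. exact: divr_ge0. Qed.

Lemma overlap_le1 x x' : overlap x x' <= 1.
Proof.
by rewrite ler_pdivrMr ?ltr0n ?card_gt0 ?P_neq0 // mul1r ler_nat subset_leq_card ?subsetIl.
Qed.

Definition box_gap X X' : K := #|box X :\: box X'|%:R / #|box X|%:R.

Lemma box_gapE X X' : box_gap X X' = 1 - \prod_i overlap (X i) (X' i).
Proof.
rewrite /box_gap cardsD natrB ?subset_leq_card ?subsetIl // mulrBl divff; last first.
  by rewrite pnatr_eq0 -lt0n card_box_gt0.
by rewrite boxI !cardsXn !natr_prod -prodf_div.
Qed.

Lemma qword_ge0 x : 0 <= qword K S P x.
Proof. by apply: le_bigmin => // x' _; apply: overlap_ge0. Qed.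

Lemma qword_le1 x : qword K S P x <= 1.
Proof. exact: bigmin_le_id. Qed.

Lemma qword_le_overlap x x' : x' \in S x -> qword K S P x <= overlap x x'.
Proof. exact: bigmin_le_cond. Qed.

Lemma qword_attained x : exists2 x', x' \in S x & qword K S P x = overlap x x'.
Proof.
have [x' x'S qx] := eq_bigmin x _ _ (S_refl x) (fun x' _ => overlap_le1 x x').
by exists x'.
Qed.

Lemma qsentE X : qsent K S P r X = 1 - prod_smallest (fun i => qword K S P (X i)) r.
Proof. by []. Qed.

Lemma card_box_adv X X' : X' \in adv_set S r X -> #|box X'| = #|box X|.
Proof.
rewrite inE => /andP[_ /forallP X'S]; rewrite !cardsXn.
by apply: eq_bigr => i _; rewrite (P_size (X'S i)).
Qed.

Lemma box_gap_le_qsent X X' :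
  X' \in adv_set S r X -> box_gap X X' <= qsent K S P r X.
Proof.
move=> X'adv; rewrite box_gapE qsentE lerD2l lerN2.
move: X'adv; rewrite inE => /andP[changed_le_r /forallP X'S].
apply: le_trans
  (prod_smallest_le (fun i => qword_ge0 (X i)) (fun i => qword_le1 (X i)) changed_le_r) _.
rewrite [X in _ <= X](bigID (mem [set i | X' i != X i])) /=.
rewrite [X in _ <= _ * X]big1 ?mulr1 => [|i]; last first.
  by rewrite inE negbK => /eqP ->; apply: overlap_id.
by apply: ler_prod => i _; rewrite qword_ge0 qword_le_overlap.
Qed.

Lemma box_gap_attained X :
  exists2 X', X' \in adv_set S r X & box_gap X X' = qsent K S P r X.
Proof.
have [worst worstS worstq] := fin_all_exists2 qword_attained.
have [T [cardT smallestT _]] := prod_smallestE (fun i => qword K S P (X i)) r.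
pose X' := [ffun i => if i \in T then worst (X i) else X i].
exists X'.
  rewrite inE; apply/andP; split.
    rewrite (leq_trans _ (geq_minl r #|'I_L|)) // -cardT subset_leq_card //.
    by apply/subsetP => i; rewrite !inE ffunE; case: (i \in T); rewrite ?eqxx.
  by apply/forallP => i; rewrite ffunE; case: (i \in T).
rewrite box_gapE qsentE smallestT [in RHS]big_mkcond; congr (1 - _).
apply: eq_bigr => i _.
by rewrite ffunE; case: (i \in T); rewrite -?worstq ?overlap_id.
Qed.

Lemma gRS_gap_bounds (Y : finType) (h : sentence V L -> Y) X X' c :
  #|box X'| = #|box X| ->
  gRS K P h X c - box_gap X X' <= gRS K P h X' c <= gRS K P h X c + box_gap X X'.
Proof.
move=> XX'; rewrite !gRS_box /box_gap XX' lerBlDr -!mulrDl -!natrD.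
apply/andP; split; apply: ler_natr_div; first exact: nlabel_setD.
by rewrite -(card_setD_sym XX') nlabel_setD.
Qed.

Lemma gRS_adv_ge (Y : finType) (h : sentence V L -> Y) X X' c : X' \in adv_set S r X ->
  Num.max (gRS K P h X c - qsent K S P r X) 0 <= gRS K P h X' c.
Proof.
move=> X'adv; rewrite ge_max gRS_ge0 andbT.
have /andP[lower _] := gRS_gap_bounds h c (card_box_adv X'adv).
have := box_gap_le_qsent X'adv; lra.
Qed.

Lemma gRS_adv_le (Y : finType) (h : sentence V L -> Y) X X' c : X' \in adv_set S r X ->
  gRS K P h X' c <= Num.min (gRS K P h X c + qsent K S P r X) 1.
Proof.
move=> X'adv; rewrite le_min gRS_le1 andbT.
have /andP[_ upper] := gRS_gap_bounds h c (card_box_adv X'adv).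
have := box_gap_le_qsent X'adv; lra.
Qed.

Lemma gRS_relabel (Y : finType) (f : sentence V L -> Y) X X' (y z : Y) :
  z != y -> #|box X'| = #|box X| ->
  exists fs : sentence V L -> Y,
    [/\ gRS K P fs X y = gRS K P f X y, gRS K P fs X z = gRS K P f X z,
        gRS K P fs X' y = Num.max (gRS K P f X y - box_gap X X') 0 &
        gRS K P fs X' z = Num.min (gRS K P f X z + box_gap X X') 1].
Proof.
move=> zNy XX'; have [g [gB gy gz]] := relabel f zNy XX'.
by exists g; rewrite !gRS_box XX' !gB gy gz natr_subn_div natr_minn_div ?card_box_gt0.
Qed.

End Smoothing.

Unset Implicit Arguments.

Theorem theorem2 (K : realFieldType) (V : finType) (S P : V -> {set V})
    (L r : nat) (Y : finType) :
  (forall x : V, x \in S x) ->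
  (forall x x' : V, x' \in S x -> x \in S x') ->
  (forall x : V, P x != set0) ->
  (0 < L)%N -> (r <= L)%N -> (1 < #|Y|)%N ->
  (forall x x' : V, x' \in S x -> #|P x| = #|P x'|) ->
  forall (f : sentence V L -> Y) (X : sentence V L) (y yB : Y),
  (forall c : Y, gRS K P f X c <= gRS K P f X y) ->
  yB != y ->
  (forall c : Y, c != y -> gRS K P f X c <= gRS K P f X yB) ->
  exists fs : sentence V L -> Y,
    [/\ gRS K P fs X y = gRS K P f X y,
        gRS K P fs X yB = gRS K P f X yB,
        (* min_{X' in S_X} g_{fs}(X', y) = max(g_{fs}(X,y) - q_X, 0) *)
        (exists2 X', X' \in adv_set S r X &
           gRS K P fs X' y = Num.max (gRS K P fs X y - qsent K S P r X) 0)
        /\ (forall X', X' \in adv_set S r X ->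
           Num.max (gRS K P fs X y - qsent K S P r X) 0 <= gRS K P fs X' y)
      & (* max_{X' in S_X} g_{fs}(X', yB) = min(g_{fs}(X,yB) + q_X, 1) *)
        (exists2 X', X' \in adv_set S r X &
           gRS K P fs X' yB = Num.min (gRS K P fs X yB + qsent K S P r X) 1)
        /\ (forall X', X' \in adv_set S r X ->
           gRS K P fs X' yB <= Num.min (gRS K P fs X yB + qsent K S P r X) 1)].
Proof.
move=> S_refl _ P_neq0 _ _ _ P_size f X y yB _ yBNy _.
have [Xs XsS gapXs] := box_gap_attained K r S_refl P_neq0 X.
have [fs [fsy fsyB fsXsy fsXsyB]] := gRS_relabel K P_neq0 f yBNy (card_box_adv P_size XsS).
exists fs; split => //.
- split; first by exists Xs; rewrite // fsXsy fsy gapXs.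
  by move=> X' X'S; apply: gRS_adv_ge.
- split; first by exists Xs; rewrite // fsXsyB fsyB gapXs.
  by move=> X' X'S; apply: gRS_adv_le.
Qed.
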